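(* Let $T$ be a tree and $c$ a caret of $T$, corresponding to the interval $I$. Then there is a tree $T'$, obtained from $T$ by attaching at most one new caret to a leaf and then performing a finite sequence of basic moves, in which the vertex corresponding to $I$ carries a caret of the type opposite to that of $c$ (i.e. $c$ can be switched from $x$-type to $y$-type or vice versa by adding at most one caret).
   Context: Let $\tau=(\sqrt5-1)/2$, so $\tau^2+\tau=1$. A tree is a finite rooted binary tree whose carets (non-leaf vertex with its two children) are each labelled $x$-type or $y$-type. Vertices correspond to subintervals of $[0,1]$: the root to $[0,1]$; if a vertex corresponds to $[p,p+\tau^k]$, an $x$-type caret there gives children $[p,p+\tau^{k+2}]$ (left) and $[p+\tau^{k+2},p+\tau^k]$ (right), and a $y$-type caret gives $[p,p+\tau^{k+1}]$ (left) and $[p+\tau^{k+1},p+\tau^k]$ (right). A basic move replaces, at some vertex of a tree, an $x$-type caret whose right child carries an $x$-type caret by a $y$-type caret whose left child carries a $y$-type caret (keeping the three subtrees hanging below, in the same left-to-right order), or performs the reverse replacement; both configurations subdivide an interval of length $\tau^k$ into consecutive intervals of lengths $\tau^{k+2},\tau^{k+3},\tau^{k+2}$, so a basic move does not change the subdivision into leaf intervals. *)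

From Stdlib Require Import Reals List Relations.
Open Scope R_scope.

(* tau = (sqrt 5 - 1)/2, so tau^2 + tau = 1 *)
Definition tau : R := (sqrt 5 - 1) / 2.

Inductive ctype : Type := CX | CY.

Definition opp_ctype (c : ctype) : ctype :=
  match c with CX => CY | CY => CX end.

Inductive tree : Type :=
| Leaf : tree
| Node : ctype -> tree -> tree -> tree.

(* The list of all carets of t, each recorded as (left endpoint, right endpoint,
   type) of the interval of the vertex carrying it, when the root of t
   corresponds to [p, p + tau^k]. *)
Fixpoint carets (t : tree) (p : R) (k : nat) : list (R * R * ctype) :=
  match t with
  | Leaf => nil
  | Node CX l r =>
      (p, p + tau ^ k, CX)
        :: carets l p (k + 2) ++ carets r (p + tau ^ (k + 2)) (k + 1)
  | Node CY l r =>
      (p, p + tau ^ k, CY)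
        :: carets l p (k + 1) ++ carets r (p + tau ^ (k + 1)) (k + 2)
  end.

Inductive add_caret : tree -> tree -> Prop :=
| add_leaf (c : ctype) : add_caret Leaf (Node c Leaf Leaf)
| add_left (c : ctype) (l l' r : tree) :
    add_caret l l' -> add_caret (Node c l r) (Node c l' r)
| add_right (c : ctype) (l r r' : tree) :
    add_caret r r' -> add_caret (Node c l r) (Node c l r').

Inductive bmove : tree -> tree -> Prop :=
| bm_xy (a b c : tree) :
    bmove (Node CX a (Node CX b c)) (Node CY (Node CY a b) c)
| bm_yx (a b c : tree) :
    bmove (Node CY (Node CY a b) c) (Node CX a (Node CX b c))
| bm_left (ct : ctype) (l l' r : tree) :
    bmove l l' -> bmove (Node ct l r) (Node ct l' r)
| bm_right (ct : ctype) (l r r' : tree) :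
    bmove r r' -> bmove (Node ct l r) (Node ct l r').

Definition bmoves : tree -> tree -> Prop := clos_refl_trans tree bmove.

(* A caret at a vertex can be given the opposite type by working only inside
   the subtree below that vertex.  To turn a y-rooted tree into an x-rooted
   one, first make its left child y-rooted and then apply the basic move
   y(y(a,b),c) -> x(a,x(b,c)) at the root; symmetrically, an x-rooted tree
   becomes y-rooted after making its right child x-rooted.  The recursion
   follows a single path downwards, so at most one caret is ever added: at
   the leaf where the path ends, with the required type. *)
From Stdlib Require Import Reals List Relations.
Open Scope R_scope.

Definition one_caret_reach (t t' : tree) : Prop :=
  exists t1, (t1 = t \/ add_caret t t1) /\ bmoves t1 t'.

Lemma bmoves_left ct l l' r : bmoves l l' -> bmoves (Node ct l r) (Node ct l' r).
Proof.
  induction 1.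
  - apply rt_step; now constructor.
  - apply rt_refl.
  - eapply rt_trans; eauto.
Qed.

Lemma bmoves_right ct l r r' : bmoves r r' -> bmoves (Node ct l r) (Node ct l r').
Proof.
  induction 1.
  - apply rt_step; now constructor.
  - apply rt_refl.
  - eapply rt_trans; eauto.
Qed.

Lemma one_caret_reach_refl t : one_caret_reach t t.
Proof. exists t; split; [now left | apply rt_refl]. Qed.

Lemma one_caret_reach_leaf c : one_caret_reach Leaf (Node c Leaf Leaf).
Proof. exists (Node c Leaf Leaf); split; [right; constructor | apply rt_refl]. Qed.

Lemma one_caret_reach_bmove t t' t'' :
  one_caret_reach t t' -> bmove t' t'' -> one_caret_reach t t''.
Proof.
  intros (t1 & Ht1 & Hmv) Hstep.
  exists t1; split; [exact Ht1 | eapply rt_trans; [exact Hmv | now apply rt_step]].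
Qed.

Lemma one_caret_reach_left ct l l' r :
  one_caret_reach l l' -> one_caret_reach (Node ct l r) (Node ct l' r).
Proof.
  intros (l1 & Hl1 & Hmv); exists (Node ct l1 r); split.
  - destruct Hl1 as [-> | Hadd]; [now left | right; now constructor].
  - now apply bmoves_left.
Qed.

Lemma one_caret_reach_right ct l r r' :
  one_caret_reach r r' -> one_caret_reach (Node ct l r) (Node ct l r').
Proof.
  intros (r1 & Hr1 & Hmv); exists (Node ct l r1); split.
  - destruct Hr1 as [-> | Hadd]; [now left | right; now constructor].
  - now apply bmoves_right.
Qed.

Lemma one_caret_reach_root (t : tree) (c : ctype) :
  exists l r, one_caret_reach t (Node c l r).
Proof.
  revert c; induction t as [|d l IHl r IHr]; intros c.
  - exists Leaf, Leaf; apply one_caret_reach_leaf.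
  - destruct d, c.
    + exists l, r; apply one_caret_reach_refl.
    + destruct (IHr CX) as (b & e & Hr).
      exists (Node CY l b), e.
      eapply one_caret_reach_bmove; [apply one_caret_reach_right, Hr | constructor].
    + destruct (IHl CY) as (a & b & Hl).
      exists a, (Node CX b r).
      eapply one_caret_reach_bmove; [apply one_caret_reach_left, Hl | constructor].
    + exists l, r; apply one_caret_reach_refl.
Qed.

Definition left_exp (d : ctype) (k : nat) : nat :=
  match d with CX => k + 2 | CY => k + 1 end.

Definition right_exp (d : ctype) (k : nat) : nat :=
  match d with CX => k + 1 | CY => k + 2 end.

Lemma carets_Node d l r p k :
  carets (Node d l r) p k =
  (p, p + tau ^ k, d)
    :: carets l p (left_exp d k) ++ carets r (p + tau ^ left_exp d k) (right_exp d k).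
Proof. now destruct d. Qed.

Lemma caret_switch (T : tree) (a b : R) (ty : ctype) (p : R) (k : nat) :
  In (a, b, ty) (carets T p k) ->
  exists T', one_caret_reach T T' /\ In (a, b, opp_ctype ty) (carets T' p k).
Proof.
  revert p k; induction T as [|d l IHl r IHr]; intros p k Hin; [destruct Hin|].
  rewrite carets_Node in Hin.
  destruct Hin as [Hroot | Hin]; [| apply in_app_or in Hin; destruct Hin as [Hin | Hin]].
  - injection Hroot as <- <- <-.
    destruct (one_caret_reach_root (Node d l r) (opp_ctype d)) as (l' & r' & Hreach).
    exists (Node (opp_ctype d) l' r'); split; [exact Hreach |].
    rewrite carets_Node; now left.
  - destruct (IHl _ _ Hin) as (l' & Hreach & Hin').
    exists (Node d l' r); split; [now apply one_caret_reach_left |].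
    rewrite carets_Node; right; apply in_or_app; now left.
  - destruct (IHr _ _ Hin) as (r' & Hreach & Hin').
    exists (Node d l r'); split; [now apply one_caret_reach_right |].
    rewrite carets_Node; right; apply in_or_app; now right.
Qed.

Theorem mainTheorem14 (T : tree) (a b : R) (ty : ctype) :
  In (a, b, ty) (carets T 0 0) ->
  exists T1 T' : tree,
    (T1 = T \/ add_caret T T1) /\ bmoves T1 T' /\
    In (a, b, opp_ctype ty) (carets T' 0 0).
Proof.
  intros Hin.
  destruct (caret_switch T a b ty 0 0 Hin) as (T' & (T1 & Hadd & Hmv) & Hin').
  now exists T1, T'.
Qed.
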